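(* Let $(R,\mathfrak m)$ be a zero-dimensional Gorenstein local ring and let $I\subseteq\mathfrak m$ be an ideal. Assume $I^r\ne0$ and $I^{r+1}=0$. Let $G=G(I)=\bigoplus_{i=0}^r G_i$ with $G_i=I^i/I^{i+1}$, and let $S=\operatorname{Soc}(G)=\bigoplus_{i=0}^r S_i$ be the socle of $G$ (annihilator of the unique maximal homogeneous ideal of $G$). The following are equivalent: (1) $G$ is a Gorenstein ring; (2) $S_i=0$ for $0\le i\le r-1$; (3) $0:_R I^{r-i}=I^{i+1}$ for $0\le i\le r-1$; (4) $0:_R I^{r-i}=I^{i+1}$ for $0\le i\le\lfloor\frac{r-1}{2}\rfloor$; (5) $\lambda(G_i)=\lambda(G_{r-i})$ for $0\le i\le\lfloor\frac{r-1}{2}\rfloor$; (6) $I^r:_R I^{r-i}=I^i$ for $1\le i\le r-1$, and $0:_R I=I^r$; (7) $I^{r-i}/I^r$ is a faithful module over $R/I^i$ for $1\le i\le r-1$, and $I$ is faithful over $R/I^r$.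
   Context: $\lambda$ denotes length; $\lfloor x\rfloor$ is the largest integer $\le x$; $G(I)$ is the associated graded ring of $I$. *)

From mathcomp Require Import all_boot all_algebra.
Set Implicit Arguments. Unset Strict Implicit. Unset Printing Implicit Defensive.
Import GRing.Theory.
Local Open Scope ring_scope.

Section Ideals.
Variable R : comUnitRingType.

Definition is_ideal (J : R -> Prop) : Prop :=
  J 0 /\ (forall x y, J x -> J y -> J (x + y)) /\ (forall a x, J x -> J (a * x)).

Definition subI (J K : R -> Prop) : Prop := forall x, J x -> K x.
Definition eqI (J K : R -> Prop) : Prop := forall x, J x <-> K x.

Definition zeroI : R -> Prop := fun x => x = 0.

Definition prodI (J K : R -> Prop) : R -> Prop := fun x =>
  exists s : seq (R * R), (forall p, p \in s -> J p.1 /\ K p.2) /\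
                          x = \sum_(p <- s) p.1 * p.2.

Fixpoint powI (J : R -> Prop) (n : nat) : R -> Prop :=
  match n with
  | 0 => fun _ => True
  | n.+1 => prodI (powI J n) J
  end.

Definition colon (J K : R -> Prop) : R -> Prop :=
  fun x => forall y, K y -> J (x * y).

Definition is_local (m : R -> Prop) : Prop :=
  is_ideal m /\ ~ m 1 /\ (forall x, ~ m x -> x \is a GRing.unit).

Definition noetherian : Prop :=
  forall c : nat -> R -> Prop, (forall n, is_ideal (c n)) ->
    (forall n, subI (c n) (c n.+1)) ->
    exists N, forall n, (N <= n)%N -> subI (c n) (c N).

Definition is_prime (P : R -> Prop) : Prop :=
  is_ideal P /\ ~ P 1 /\ (forall x y, P (x * y) -> P x \/ P y).

Definition dim0 (m : R -> Prop) : Prop :=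
  forall P, is_prime P -> eqI P m.

(* socle 0 :_R m is a simple R-module (submodules = ideals inside it) *)
Definition simple_socle (m : R -> Prop) : Prop :=
  (exists x, colon zeroI m x /\ x <> 0) /\
  (forall J, is_ideal J -> subI J (colon zeroI m) ->
     subI J zeroI \/ subI (colon zeroI m) J).

Definition Gorenstein0 (m : R -> Prop) : Prop :=
  is_local m /\ noetherian /\ dim0 m /\ simple_socle m.

(* R-submodules of B/A correspond to ideals between A and B *)
Definition is_chain (A B : R -> Prop) (n : nat) : Prop :=
  exists c : nat -> R -> Prop, (forall k, is_ideal (c k)) /\
    eqI (c 0%N) A /\ eqI (c n) B /\
    (forall k, (k < n)%N -> subI (c k) (c k.+1) /\ ~ subI (c k.+1) (c k)).

Definition has_length (A B : R -> Prop) (n : nat) : Prop :=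
  is_chain A B n /\ (forall k, is_chain A B k -> (k <= n)%N).

(* N/N' is a faithful module over R/J (J annihilates N/N'):
   an element x+J annihilating N/N' must be 0 in R/J *)
Definition faithful_over (J N N' : R -> Prop) : Prop :=
  forall x, (forall y, N y -> N' (x * y)) -> J x.

(* Elements of G are represented by sequences f with f j ∈ I^j, the
   degree-j component being the class of f j in I^j/I^(j+1); two
   representatives are equal in G iff every component difference lies in
   I^(j+1).  (Components of degree > r vanish automatically when I^(r+1)=0.) *)
Variables (m I : R -> Prop).

Definition Gel := nat -> R.
Definition inG (f : Gel) : Prop := forall j, powI I j (f j).
Definition geq (f g : Gel) : Prop := forall j, powI I j.+1 (f j - g j).
Definition Gzero : Gel := fun _ => 0.
Definition Gone : Gel := fun j => if j == 0%N then 1 else 0.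
Definition Gadd (f g : Gel) : Gel := fun j => f j + g j.
Definition Gmul (f g : Gel) : Gel :=
  fun k => \sum_(j < k.+1) f j * g (k - j)%N.

Definition Gideal (J : Gel -> Prop) : Prop :=
  (forall x, J x -> inG x) /\ J Gzero /\
  (forall x y, J x -> inG y -> geq x y -> J y) /\
  (forall x y, J x -> J y -> J (Gadd x y)) /\
  (forall a x, inG a -> J x -> J (Gmul a x)).

(* the unique maximal homogeneous ideal  m/I ⊕ G_1 ⊕ ... ⊕ G_r *)
Definition Gmax (f : Gel) : Prop := inG f /\ m (f 0%N).

Definition Gsoc (x : Gel) : Prop :=
  inG x /\ forall y, Gmax y -> geq (Gmul x y) Gzero.

Definition Ghomog (i : nat) (x : Gel) : Prop :=
  inG x /\ forall j, j <> i -> powI I j.+1 (x j).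

Definition Soc_deg_zero (i : nat) : Prop :=
  forall x, Gsoc x -> Ghomog i x -> geq x Gzero.

Definition G_local : Prop :=
  Gideal Gmax /\ ~ Gmax Gone /\
  forall f, inG f -> ~ Gmax f -> exists g, inG g /\ geq (Gmul f g) Gone.

Definition G_noetherian : Prop :=
  forall c : nat -> Gel -> Prop, (forall n, Gideal (c n)) ->
    (forall n x, c n x -> c n.+1 x) ->
    exists N, forall n x, (N <= n)%N -> c n x -> c N x.

Definition G_prime (P : Gel -> Prop) : Prop :=
  Gideal P /\ ~ P Gone /\
  (forall x y, inG x -> inG y -> P (Gmul x y) -> P x \/ P y).

Definition G_dim0 : Prop := forall P, G_prime P -> forall x, P x <-> Gmax x.

Definition G_simple_socle : Prop :=
  (exists x, Gsoc x /\ ~ geq x Gzero) /\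
  (forall N, Gideal N -> (forall x, N x -> Gsoc x) ->
     (forall x, N x -> geq x Gzero) \/ (forall x, Gsoc x -> N x)).

Definition G_Gorenstein : Prop :=
  G_local /\ G_noetherian /\ G_dim0 /\ G_simple_socle.

End Ideals.

(* G(I) is always local, noetherian and zero-dimensional, its elements of
   positive degree being nilpotent, so (1) says that Soc(G) is simple.  The
   socle of R, which lies in I^r, sits in Soc(G) in degree r; hence simplicity
   amounts to Soc(G) vanishing below degree r, which is (2).  An element of
   I^j \ I^(j+1) annihilating I^(r-j), pushed down the I-adic filtration as far
   as possible and then into the socle modulo the next power, is a socle
   element of G of degree < r: this gives (2) => (3), and conversely (3) forces
   every socle element of G into degree r.  Since Soc(R) is simple, Matlis
   duality J |-> 0 :_R J is an inclusion-reversing involution on ideals that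
   preserves the lengths of subquotients; so λ(G_i) = λ((0 : I^i)/(0 : I^(i+1))),
   which links (3), (4) and (5).  Finally (6) and (7) are reformulations of (3). *)

From Pilot Require Import Defs.
From mathcomp Require Import all_boot all_algebra.
From mathcomp Require Import boolp zify ring.
Set Implicit Arguments. Unset Strict Implicit. Unset Printing Implicit Defensive.
Import GRing.Theory.
Local Open Scope ring_scope.

(** * Ideals and their powers *)

Section IdealAlgebra.
Variable R : comUnitRingType.
Implicit Types (J K : R -> Prop) (x y : R).

Lemma eqI_eq J K : eqI J K -> J = K.
Proof. by move=> JK; apply: funext => x; apply: propext. Qed.

Lemma subI_anti J K : subI J K -> subI K J -> J = K.
Proof. by move=> JK KJ; apply: eqI_eq => x; split; [apply: JK | apply: KJ]. Qed.

Lemma subI_trans J K L : subI J K -> subI K L -> subI J L.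
Proof. by move=> JK KL x /JK /KL. Qed.

Lemma not_subI J K : ~ subI J K -> exists2 x, J x & ~ K x.
Proof.
move=> /existsNP [x /not_implyP [Jx nKx]]; by exists x.
Qed.

Section Closure.
Variable J : R -> Prop.
Hypothesis iJ : is_ideal J.

Lemma ideal0 : J 0. Proof. by case: iJ. Qed.
Lemma idealD x y : J x -> J y -> J (x + y).
Proof. by case: iJ => _ [+ _]; apply. Qed.
Lemma idealMl a x : J x -> J (a * x).
Proof. by case: iJ => _ [_]; apply. Qed.
Lemma idealMr a x : J x -> J (x * a).
Proof. by rewrite mulrC; apply: idealMl. Qed.
Lemma idealN x : J x -> J (- x).
Proof. by rewrite -mulN1r; apply: idealMl. Qed.
Lemma idealB x y : J x -> J y -> J (x - y).
Proof. by move=> Jx Jy; apply: idealD => //; apply: idealN. Qed.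

Lemma ideal_sum (T : Type) (s : seq T) (P : pred T) (F : T -> R) :
  (forall i, P i -> J (F i)) -> J (\sum_(i <- s | P i) F i).
Proof. by move=> HF; elim/big_ind: _ => //; [exact: ideal0 | exact: idealD]. Qed.

End Closure.

Lemma zeroI_ideal : is_ideal (@zeroI R).
Proof. by split=> [|]; rewrite /zeroI //; split=> [x y -> ->|a x ->]; rewrite ?addr0 ?mulr0. Qed.

Lemma zeroI_sub J : is_ideal J -> subI (@zeroI R) J.
Proof. by move=> iJ x ->; apply: ideal0. Qed.

Lemma prodI_ideal J K : is_ideal J -> is_ideal K -> is_ideal (prodI J K).
Proof.
move=> iJ iK; split; first by exists [::]; rewrite big_nil.
split=> [x y [s [Hs ->]] [t [Ht ->]] | a x [s [Hs ->]]].
  exists (s ++ t); split; last by rewrite big_cat.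
  by move=> p; rewrite mem_cat => /orP[/Hs | /Ht].
exists [seq (a * p.1, p.2) | p <- s]; split.
  by move=> _ /mapP[q /Hs[Jq Kq] ->]; split=> //; apply: idealMl.
by rewrite big_map mulr_sumr; apply: eq_bigr => p _; rewrite mulrA.
Qed.

Lemma prodI_mul J K x y : J x -> K y -> prodI J K (x * y).
Proof. by move=> Jx Ky; exists [:: (x, y)]; rewrite big_seq1; split=> // p /[!inE] /eqP->. Qed.

Lemma colon_ideal J K : is_ideal J -> is_ideal (colon J K).
Proof.
move=> iJ; split=> [y _|]; first by rewrite mul0r; apply: ideal0.
split=> [x x' Hx Hx' y Ky | a x Hx y Ky].
  by rewrite mulrDl; apply: idealD; [|apply: Hx|apply: Hx'].
by rewrite -mulrA; apply: idealMl; [|apply: Hx].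
Qed.

Definition ann J := colon (@zeroI R) J.

Lemma ann_ideal J : is_ideal (ann J).
Proof. exact/colon_ideal/zeroI_ideal. Qed.

Lemma ann_anti J K : subI J K -> subI (ann K) (ann J).
Proof. by move=> JK x Kx y /JK; apply: Kx. Qed.

Lemma ann_full : ann (fun _ => True) = @zeroI R.
Proof.
apply: subI_anti => [x /(_ 1 I)|]; first by rewrite /zeroI mulr1.
by apply: zeroI_sub; apply: ann_ideal.
Qed.

Lemma ann_zero : ann (@zeroI R) = (fun _ => True).
Proof. by apply: subI_anti => // x _ y ->; rewrite /zeroI mulr0. Qed.

Lemma sub_ann_ann J : subI J (ann (ann J)).
Proof. by move=> x Jx y Hy; rewrite /zeroI mulrC; apply: Hy. Qed.

Section Powers.
Variable I : R -> Prop.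
Hypothesis iI : is_ideal I.

Lemma powI_ideal n : is_ideal (powI I n).
Proof. by elim: n => [|n IH] //=; apply: prodI_ideal. Qed.

Lemma powI_mul a b x y : powI I a x -> powI I b y -> powI I (a + b) (x * y).
Proof.
elim: b y => [|b IH] y Px; first by rewrite addn0 => _; apply: idealMr => //; apply: powI_ideal.
move=> [s [Hs ->]]; rewrite addnS mulr_sumr.
exists [seq (x * p.1, p.2) | p <- s]; split.
  by move=> _ /mapP[q /Hs[P1 P2] ->]; split=> //; apply: IH.
by rewrite big_map; apply: eq_bigr => p _; rewrite mulrA.
Qed.

Lemma powI1 : powI I 1 = I.
Proof.
apply: subI_anti => [_ [s [Hs ->]]| x Ix]; last by rewrite -[x]mul1r; apply: prodI_mul.
by rewrite big_seq; apply: (ideal_sum iI) => p /Hs[_ Ip]; apply: idealMl.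
Qed.

Lemma powI_subS n : subI (powI I n.+1) (powI I n).
Proof.
elim: n => [|n IH] x //= [s [Hs ->]].
by exists s; split=> // p /Hs[/IH].
Qed.

Lemma subI_powI a b : (a <= b)%N -> subI (powI I b) (powI I a).
Proof.
move=> /subnK <-; elim: (b - a)%N => [|k IH] x //.
by rewrite addSn => /powI_subS /IH.
Qed.

Lemma powI_mul_of_mulI x c : (forall y, I y -> powI I c.+1 (x * y)) ->
  forall b y, powI I b.+1 y -> powI I (c.+1 + b) (x * y).
Proof.
move=> xI; elim=> [|b IH] y; first by rewrite powI1 addn0; apply: xI.
move=> [s [Hs ->]]; rewrite mulr_sumr addnS.
exists [seq (x * p.1, p.2) | p <- s]; split.
  by move=> _ /mapP[q /Hs[P1 P2] ->]; split=> //; apply: IH.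
by rewrite big_map; apply: eq_bigr => p _; rewrite mulrA.
Qed.

Lemma powI_vanish r : eqI (powI I r.+1) (@zeroI R) ->
  forall n c, (r < n)%N -> powI I n c -> c = 0.
Proof. by move=> Ir1 n c rn /(subI_powI rn) /Ir1. Qed.

Lemma powI_sub_ann r i : eqI (powI I r.+1) (@zeroI R) -> (i <= r)%N ->
  subI (powI I i.+1) (ann (powI I (r - i))).
Proof. by move=> Ir1 ir x Px y Py; apply/Ir1; have := powI_mul Px Py; rewrite addSn subnKC. Qed.

End Powers.

End IdealAlgebra.

Arguments zeroI_ideal {R}.

Section ZeroDimensional.
Variable R : comUnitRingType.
Implicit Types (J K : R -> Prop) (x y : R).
Variable m : R -> Prop.
Hypothesis noeth : noetherian R.
Hypothesis d0 : dim0 m.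

Lemma noetherian_maximal (T : Type) (S : T -> Prop) (Q : T -> R -> Prop) :
  (forall c, is_ideal (Q c)) -> (exists c, S c) ->
  exists2 c0, S c0 & forall c, S c -> subI (Q c0) (Q c) -> subI (Q c) (Q c0).
Proof.
move=> iQ [c1 Sc1]; apply: contrapT => nomax.
have up (c : {c | S c}) : exists c' : {c | S c},
    subI (Q (sval c)) (Q (sval c')) /\ ~ subI (Q (sval c')) (Q (sval c)).
  case: c => c Sc /=; apply: contrapT => nup; apply: nomax; exists c => // c' Sc' cc'.
  by apply: contrapT => c'c; apply: nup; exists (exist _ c' Sc').
pose nxt c := sval (cid (up c)).
pose chain n := iter n nxt (exist _ c1 Sc1).
have [N HN] := noeth (fun n => iQ (sval (chain n)))
  (fun n => (svalP (cid (up (chain n)))).1).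
by apply: (svalP (cid (up (chain N)))).2; apply: (HN N.+1).
Qed.

(* Maximising the annihilator [K : c w] makes it prime, hence equal to [m]. *)
Lemma socle_multiple K w : is_ideal K -> ~ K w ->
  exists c, ~ K (c * w) /\ forall a, m a -> K (a * (c * w)).
Proof.
move=> iK Kw.
have iQ c : is_ideal (fun a => K (a * (c * w))).
  split; first by rewrite mul0r; apply: ideal0.
  split=> [x y Hx Hy | a x Hx]; first by rewrite mulrDl; apply: idealD.
  by rewrite -mulrA; apply: idealMl.
have [|c0 Sc0 c0max] := noetherian_maximal (S := fun c => ~ K (c * w)) iQ.
  by exists 1; rewrite mul1r.
exists c0; split=> // a ma.
suff P_prime : is_prime (fun a => K (a * (c0 * w))) by apply/(d0 P_prime).
split=> //; split; first by rewrite mul1r.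
move=> x y Kxy; case: (EM (K (x * (c0 * w)))) => [|nKx]; [by left | right].
have Sx : ~ K ((x * c0) * w) by rewrite -mulrA.
apply: (c0max _ Sx) => [z Kz|] /=; first by rewrite -mulrA mulrCA; apply: idealMl.
by rewrite -mulrA mulrA [y * x]mulrC.
Qed.

End ZeroDimensional.

Section LocalRing.
Variable R : comUnitRingType.
Variable m : R -> Prop.
Hypothesis loc : is_local m.

Lemma local_ideal : is_ideal m. Proof. by case: loc. Qed.
Lemma local_not1 : ~ m 1. Proof. by case: loc => _ []. Qed.
Lemma local_unit x : ~ m x -> x \is a GRing.unit. Proof. by case: loc => _ [] _; apply. Qed.

End LocalRing.

(** * Ascending sequences and chains of ideals *)

Section Chains.
Variable R : comUnitRingType.
Implicit Types (A B C X : R -> Prop) (d e : nat -> R -> Prop).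

Definition capI A B : R -> Prop := fun x => A x /\ B x.
Definition sumI A B : R -> Prop := fun x => exists a b, [/\ A a, B b & x = a + b].

Lemma capI_ideal A B : is_ideal A -> is_ideal B -> is_ideal (capI A B).
Proof.
move=> iA iB; split; first by split; apply: ideal0.
by split=> [x y [Ax Bx] [Ay By] | a x [Ax Bx]]; split; apply: idealD || apply: idealMl.
Qed.

Lemma capI_idl A B : subI A B -> capI A B = A.
Proof. by move=> AB; apply: subI_anti => [x []|x Ax] //; split=> //; apply: AB. Qed.

Lemma capI_idr A B : subI B A -> capI A B = B.
Proof. by move=> BA; apply: subI_anti => [x []|x Bx] //; split=> //; apply: BA. Qed.

Lemma capI_capI_sub A B C : subI B C -> capI (capI A C) B = capI A B.
Proof.
by move=> BC; apply: subI_anti => [x [[]]|x [Ax Bx]] //; split=> //; split=> //; apply: BC.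
Qed.

Lemma sumI_ideal A B : is_ideal A -> is_ideal B -> is_ideal (sumI A B).
Proof.
move=> iA iB; split; first by exists 0, 0; rewrite addr0; split=> //; apply: ideal0.
split=> [_ _ [a [b [Aa Bb ->]]] [a' [b' [Aa' Bb' ->]]] | c _ [a [b [Aa Bb ->]]]].
  by exists (a + a'), (b + b'); split; [apply: idealD..| rewrite addrACA].
by exists (c * a), (c * b); split; [apply: idealMl..| rewrite mulrDr].
Qed.

Lemma sumI_subl A B : is_ideal B -> subI A (sumI A B).
Proof. by move=> iB x Ax; exists x, 0; rewrite addr0; split=> //; apply: ideal0. Qed.

Lemma sumI_subr A B : is_ideal A -> subI B (sumI A B).
Proof. by move=> iA x Bx; exists 0, x; rewrite add0r; split=> //; apply: ideal0. Qed.

Lemma sumI_le A B C : is_ideal C -> subI A C -> subI B C -> subI (sumI A B) C.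
Proof. by move=> iC AC BC _ [a [b [/AC Ca /BC Cb ->]]]; apply: idealD. Qed.

Lemma sumI_idl A B : is_ideal A -> is_ideal B -> subI B A -> sumI A B = A.
Proof. by move=> iA iB BA; apply: subI_anti; [apply: sumI_le | apply: sumI_subl]. Qed.

Lemma sumI_idr A B : is_ideal A -> is_ideal B -> subI A B -> sumI A B = B.
Proof. by move=> iA iB AB; apply: subI_anti; [apply: sumI_le | apply: sumI_subr]. Qed.

Definition ascending d L := forall k, (k < L)%N -> subI (d k) (d k.+1).
Definition strict_step d k := ~ subI (d k.+1) (d k).
Definition nsteps d L := (\sum_(k < L) `[< strict_step d k >])%N.

Lemma nstepsS d L : nsteps d L.+1 = (nsteps d L + `[< strict_step d L >])%N.
Proof. by rewrite /nsteps big_ord_recr. Qed.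

Lemma ascending_capI d L B : ascending d L -> ascending (fun k => capI (d k) B) L.
Proof. by move=> dL k kL x [dx Bx]; split=> //; apply: dL. Qed.

Lemma ascending_sumI d L B : ascending d L -> ascending (fun k => sumI (d k) B) L.
Proof. by move=> dL k kL _ [a [b [da Bb ->]]]; exists a, b; split=> //; apply: dL. Qed.

Lemma ascending_le d L : ascending d L -> forall j k, (j <= k <= L)%N -> subI (d j) (d k).
Proof.
move=> dL j; elim=> [|k IH] /andP[jk kL]; first by case: j jk => // x.
case: (ltngtP j k.+1) jk => // [jk _ | -> _ //].
by apply: subI_trans (IH _) (dL _ kL); rewrite -ltnS jk ltnW.
Qed.

Lemma chain_nsteps c n : (forall k, (k < n)%N -> strict_step c k) -> nsteps c n = n.
Proof.
move=> Hc; rewrite /nsteps (eq_bigr (fun _ => 1%N)) ?sum1_card ?card_ord //.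
by move=> [k kn] _; rewrite asboolT //; apply: Hc.
Qed.

Lemma chain_ascending A B n : is_chain A B n -> exists c,
  [/\ forall k, is_ideal (c k), c 0%N = A, c n = B, ascending c n
    & forall k, (k < n)%N -> strict_step c k].
Proof.
move=> [c [ic [/eqI_eq c0 [/eqI_eq cn Hc]]]].
by exists c; split=> // k /Hc[].
Qed.

Lemma chain_of_ascending d L : (forall k, is_ideal (d k)) -> ascending d L ->
  is_chain (d 0%N) (d L) (nsteps d L).
Proof.
move=> id; elim: L => [|L IH] dL.
  by rewrite /nsteps big_ord0; exists d.
have [|c [ic [c0 [cL Hc]]]] := IH; first by move=> k kL; apply/dL/ltnW.
rewrite nstepsS; case: asboolP => [strictL | /contrapT eqL]; last first.
  rewrite addn0 (subI_anti eqL (dL _ (ltnSn _))).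
  by exists c.
rewrite addn1; set s := nsteps d L in cL Hc *.
exists (fun k => if k == s.+1 then d L.+1 else c k); split; first by move=> k; case: ifP.
split=> //; split=> [x|]; first by rewrite eqxx.
move=> k; rewrite ltnS leq_eqVlt => /orP[/eqP-> | ks]; last first.
  by rewrite eqSS (ltn_eqF ks) (ltn_eqF (ltnW ks : (k < s.+1)%N)); apply: Hc.
rewrite eqxx (ltn_eqF (ltnSn s)); split; first by move=> x /cL; apply: dL.
by move=> H; apply: strictL => x /H /cL.
Qed.

(* Modular law: a strict step [d k ⊂ d k.+1] stays strict after intersecting
   with [B] or after adding [B]. *)
Lemma nsteps_split d L B : (forall k, is_ideal (d k)) -> ascending d L -> is_ideal B ->
  (nsteps d L <= nsteps (fun k => capI (d k) B) L + nsteps (fun k => sumI (d k) B) L)%N.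
Proof.
move=> id dL iB; rewrite /nsteps -big_split /=; apply: leq_sum => [[k kL]] _ /=.
case: asboolP => // strictk; case: asboolP => [//|/contrapT capk].
case: asboolP => [|/contrapT sumk]; first by rewrite addn1.
exfalso; apply: strictk => x dx.
have [a [b [da Bb Ex]]] := sumk x (sumI_subl iB dx).
have db : d k.+1 b.
  by rewrite (_ : b = x - a); [apply: idealB; last apply: dL | rewrite Ex addrC addKr].
by rewrite Ex; apply: idealD => //; case: (capk b).
Qed.

Lemma nsteps_le1 e L B' B : (forall k, is_ideal (e k)) -> ascending e L ->
  (forall k, (k <= L)%N -> subI B' (e k) /\ subI (e k) B) ->
  (forall X, is_ideal X -> subI B' X -> subI X B -> subI X B' \/ subI B X) ->
  (nsteps e L <= 1)%N.
Proof.
move=> ie eL eB dich.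
suff : (nsteps e L <= `[< ~ subI (e L) B' >])%N by move/leq_trans; apply; apply: leq_b1.
elim: L eL eB => [|L IH] eL eB; first by rewrite /nsteps big_ord0.
have {}IH : (nsteps e L <= `[< ~ subI (e L) B' >])%N.
  by apply: IH => k kL; [apply/eL/ltnW | apply/eB/ltnW].
have [B'L LB] := eB L (leqnSn L).
rewrite nstepsS; case: asboolP => [strictL | /contrapT eqL]; last first.
  by rewrite addn0 (subI_anti eqL (eL _ (ltnSn _))).
have LB' : subI (e L) B'.
  case: (dich _ (ie L) B'L LB) => // BL; case: strictL => x /(eB _ (leqnn _)).2; apply: BL.
move: IH; rewrite asboolF => [|/(_ LB') //]; rewrite leqn0 => /eqP->.
by rewrite asboolT //; apply: contra_not strictL => L1B' x /L1B'; apply: B'L.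
Qed.

End Chains.

(** * Finite length *)

Section FiniteLength.
Variable R : comUnitRingType.
Implicit Types (A B C J X : R -> Prop) (d e : nat -> R -> Prop) (xs : seq R).
Variable m : R -> Prop.
Hypotheses (noeth : noetherian R) (loc : is_local m) (d0 : dim0 m).

Definition adjoin J x : R -> Prop := fun y => exists a c, J a /\ y = a + c * x.

Fixpoint spanI A xs : R -> Prop :=
  if xs is x :: xs' then adjoin (spanI A xs') x else A.

Lemma adjoin_ideal J x : is_ideal J -> is_ideal (adjoin J x).
Proof.
move=> iJ; split; first by exists 0, 0; rewrite mul0r addr0; split=> //; apply: ideal0.
split=> [_ _ [a [c [Ja ->]]] [a' [c' [Ja' ->]]] | b _ [a [c [Ja ->]]]].
  by exists (a + a'), (c + c'); split; [apply: idealD | rewrite mulrDl addrACA].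
by exists (b * a), (b * c); split; [apply: idealMl | rewrite mulrDr mulrA].
Qed.

Lemma adjoin_subl J x : subI J (adjoin J x).
Proof. by move=> y Jy; exists y, 0; rewrite mul0r addr0. Qed.

Lemma adjoin_gen J x : is_ideal J -> adjoin J x x.
Proof. by move=> iJ; exists 0, 1; rewrite mul1r add0r; split=> //; apply: ideal0. Qed.

Lemma spanI_ideal A xs : is_ideal A -> is_ideal (spanI A xs).
Proof. by move=> iA; elim: xs => [|x xs IH] //=; apply: adjoin_ideal. Qed.

Lemma spanI_subl A xs : subI A (spanI A xs).
Proof. by elim: xs => [|x xs IH] //= y /IH; apply: adjoin_subl. Qed.

(* Since [m] is the set of non-units, an element of [X] outside [B'] is a unit
   multiple of [x] modulo [B']. *)
Lemma adjoin_dichotomy B' x X : is_ideal B' -> is_ideal X ->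
  (forall a, m a -> B' (a * x)) -> subI B' X -> subI X (adjoin B' x) ->
  subI X B' \/ subI (adjoin B' x) X.
Proof.
move=> iB iX mx BX XA; case: (EM (subI X B')) => [|/not_subI[y Xy nBy]]; [by left | right].
have [b [c [Bb Ey]]] := XA y Xy.
have nmc : ~ m c by move=> mc; apply: nBy; rewrite Ey; apply: idealD => //; apply: mx.
have Xx : X x.
  rewrite -[x]mul1r -(mulVr (local_unit loc nmc)) -mulrA.
  apply: (idealMl iX); rewrite (_ : c * x = y - b); last by rewrite Ey addrC addKr.
  by apply: (idealB iX) => //; apply: BX.
by move=> _ [a [c' [Ba ->]]]; apply: idealD => //; [apply: BX | apply: idealMl].
Qed.

Lemma nsteps_le_size xs A e L : is_ideal A -> (forall x, x \in xs -> forall a, m a -> A (a * x)) ->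
  (forall k, is_ideal (e k)) -> ascending e L ->
  (forall k, (k <= L)%N -> subI A (e k) /\ subI (e k) (spanI A xs)) ->
  (nsteps e L <= size xs)%N.
Proof.
elim: xs e => [|x xs IH] e iA mxs ie eL eA /=.
  rewrite /nsteps big1 // => -[k kL] _; rewrite asboolF // => /=; apply.
  by move=> y /(eA _ kL).2 /(eA _ (ltnW kL)).1.
set B' := spanI A xs; have iB' : is_ideal B' by apply: spanI_ideal.
have mB' y : y \in xs -> forall a, m a -> A (a * y).
  by move=> ys; apply: mxs; rewrite inE ys orbT.
apply: leq_trans (nsteps_split ie eL iB') _; rewrite -addn1; apply: leq_add.
  apply: IH => // [k||k kL]; [exact: capI_ideal | exact: ascending_capI |].
  split=> [y Ay|y []//]; split; [exact: (eA k kL).1 | exact: spanI_subl].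
apply: (nsteps_le1 (B' := B') (B := adjoin B' x)) => [k||k kL|X iX].
- exact: sumI_ideal.
- exact: ascending_sumI.
- split; first exact: sumI_subr.
  by apply: sumI_le; [apply: adjoin_ideal | apply: (eA k kL).2 | apply: adjoin_subl].
- apply: adjoin_dichotomy => // a ma; apply: spanI_subl; apply: mxs => //.
  by rewrite inE eqxx.
Qed.

Lemma finitely_generated_over A B : is_ideal A -> is_ideal B -> subI A B ->
  exists xs, (forall x, x \in xs -> B x) /\ subI B (spanI A xs).
Proof.
move=> iA iB AB.
have [|xs xsB xsmax] := noetherian_maximal noeth (S := fun xs => forall x, x \in xs -> B x)
  (Q := spanI A) (fun xs => spanI_ideal xs iA); first by exists [::].
exists xs; split=> // y By; apply: (xsmax (y :: xs)) => [z||/=].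
- by rewrite inE => /orP[/eqP-> // | /xsB].
- exact: adjoin_subl.
- exact/adjoin_gen/spanI_ideal.
Qed.

Fixpoint loewy t : R -> Prop :=
  if t is t'.+1 then colon (loewy t') m else @zeroI R.

Lemma loewy_ideal t : is_ideal (loewy t).
Proof. by elim: t => [|t IH] /=; [apply: zeroI_ideal | apply: colon_ideal]. Qed.

Lemma loewy_subS t : subI (loewy t) (loewy t.+1).
Proof.
elim: t => [|t IH] x /=; first by move=> -> y _; rewrite mul0r.
by move=> Hx y my; apply/IH/Hx.
Qed.

Lemma loewy_full : exists N, forall x, loewy N x.
Proof.
have [N HN] := noeth loewy_ideal loewy_subS.
exists N => w; apply: contrapT => nw.
have [c [nz Hz]] := socle_multiple noeth d0 (loewy_ideal N) nw.
by apply/nz/(HN N.+1 (leqnSn _)) => /= y my; rewrite mulrC; apply: Hz.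
Qed.

(* Each layer of the Loewy series is killed by [m] and finitely generated, so
   it contributes boundedly many strict steps to any ascending sequence. *)
Lemma nsteps_bounded : exists M, forall d L, (forall k, is_ideal (d k)) -> ascending d L ->
  (nsteps d L <= M)%N.
Proof.
have [N loewyN] := loewy_full.
have gens t := cid (finitely_generated_over (loewy_ideal t) (loewy_ideal t.+1) (@loewy_subS t)).
exists (\sum_(t < N) size (sval (gens t)))%N => d L id dL.
suff bound T : (nsteps (fun k => capI (d k) (loewy T)) L <= \sum_(t < T) size (sval (gens t)))%N.
  have dN : (fun k => capI (d k) (loewy N)) = d.
    by apply: funext => k; apply: capI_idl => x _; apply: loewyN.
  by have := bound N; rewrite dN.
elim: T => [|T IH].
  rewrite /nsteps big_ord0 leqn0 big1 // => k _; rewrite asboolF // => -[].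
  by move=> x [_ ->]; split; [apply: ideal0 | ].
have [xsTP spanT] := svalP (gens T); set xs := sval (gens T) in xsTP spanT *.
rewrite big_ord_recr /=.
have idT k : is_ideal (capI (d k) (loewy T.+1)) by apply: capI_ideal => //; apply: loewy_ideal.
apply: leq_trans (nsteps_split idT (ascending_capI dL) (loewy_ideal T)) _; apply: leq_add.
  have dT' : (fun k => capI (capI (d k) (loewy T.+1)) (loewy T)) = (fun k => capI (d k) (loewy T)).
    by apply: funext => k; apply/capI_capI_sub/loewy_subS.
  by rewrite dT'.
apply: (nsteps_le_size (A := loewy T)) => [||k||k kL]; first exact: loewy_ideal.
- by move=> x /xsTP Tx a ma; rewrite mulrC; apply: Tx.
- exact: sumI_ideal (idT k) (loewy_ideal T).
- exact: (ascending_sumI (ascending_capI dL)).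
split; first exact/sumI_subr/capI_ideal/loewy_ideal.
apply: sumI_le; [exact/spanI_ideal/loewy_ideal | by move=> x [_ /spanT] | exact: spanI_subl].
Qed.

Lemma chain_bounded : exists M, forall A B n, is_chain A B n -> (n <= M)%N.
Proof.
have [M HM] := nsteps_bounded; exists M => A B n /chain_ascending[c [ic _ _ cn strict]].
by rewrite -(chain_nsteps strict) HM.
Qed.

Lemma chain_exists A B : is_ideal A -> is_ideal B -> subI A B -> exists n, is_chain A B n.
Proof.
move=> iA iB AB; exists (nsteps (fun k => if k is 0 then A else B) 1).
by apply: (chain_of_ascending (d := fun k => if k is 0 then A else B)) => [[]|[]].
Qed.

Lemma has_length_exists A B : is_ideal A -> is_ideal B -> subI A B ->
  exists n, has_length A B n.
Proof.
move=> iA iB AB; have [M HM] := chain_bounded.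
have [n0 c0] := chain_exists iA iB AB.
have exP : exists n, `[< is_chain A B n >] by exists n0; apply/asboolP.
have ubP n : `[< is_chain A B n >] -> (n <= M)%N by move/asboolP/HM.
case: (ex_maxnP exP ubP) => n /asboolP cn nmax.
by exists n; split=> // k /asboolP/nmax.
Qed.

End FiniteLength.

Section LengthAlgebra.
Variable R : comUnitRingType.
Implicit Types (A B C : R -> Prop) (c : nat -> R -> Prop).

Lemma chainP A B n c : (forall k, is_ideal (c k)) -> c 0%N = A -> c n = B ->
  ascending c n -> (forall k, (k < n)%N -> strict_step c k) -> is_chain A B n.
Proof. by move=> ic <- <- cn sc; exists c; do !split=> //; [apply: cn | apply: sc]. Qed.

Lemma chain_cat A B C p q : is_chain A B p -> is_chain B C q -> is_chain A C (p + q).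
Proof.
move=> /chain_ascending[c1 [ic1 c10 c1p asc1 str1]] /chain_ascending[c2 [ic2 c20 c2q asc2 str2]].
pose e k := if (k <= p)%N then c1 k else c2 (k - p)%N.
have e_lo k : (k <= p)%N -> e k = c1 k by rewrite /e => ->.
have e_hi k : (p <= k)%N -> e k = c2 (k - p)%N.
  rewrite /e leq_eqVlt => /orP[/eqP <- | pk]; first by rewrite leqnn subnn c1p c20.
  by rewrite leqNgt pk.
apply: (chainP (c := e)) => [k||||k kpq]; first by rewrite /e; case: ifP.
- by rewrite e_lo.
- by rewrite e_hi ?leq_addr // addKn.
- move=> k kpq; case: (ltnP k p) => kp; first by rewrite !e_lo ?(ltnW kp) //; apply: asc1.
  by rewrite !e_hi ?(leqW kp) // subSn //; apply: asc2; rewrite ltn_subLR.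
case: (ltnP k p) => kp; first by rewrite /strict_step !e_lo ?(ltnW kp) //; apply: str1.
by rewrite /strict_step !e_hi ?(leqW kp) // subSn //; apply: str2; rewrite ltn_subLR.
Qed.

Lemma has_length_uniq A B n n' : has_length A B n -> has_length A B n' -> n = n'.
Proof. by move=> [cn maxn] [cn' maxn']; apply/eqP; rewrite eqn_leq maxn ?maxn'. Qed.

Lemma chain_sub_eq0 A B n : is_chain A B n -> subI B A -> n = 0%N.
Proof.
case/chain_ascending=> c [_ <- <- cA str] BA.
move: BA; case: n cA str => // n cA str BA; case: (str 0%N isT).
by apply: subI_trans BA; apply: (ascending_le cA); rewrite leqnn.
Qed.

Lemma has_length_eq0 A B n : has_length A B n -> n = 0%N <-> subI B A.
Proof.
case=> cn _; split=> [n0|]; last exact: chain_sub_eq0 cn.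
by move: cn; rewrite n0 => /chain_ascending[c [_ <- <- _ _]].
Qed.

Lemma has_length_refl A : is_ideal A -> has_length A A 0.
Proof. by move=> iA; split=> [|k /chain_sub_eq0 -> //]; exists (fun _ => A). Qed.

(* Intersecting and adding [B] splits a chain from [A] to [C] into sequences
   from [A] to [B] and from [B] to [C]. *)
Lemma chain_le_add A B C k p q : is_ideal B -> subI A B -> subI B C ->
  is_chain A C k -> has_length A B p -> has_length B C q -> (k <= p + q)%N.
Proof.
move=> iB AB BC /chain_ascending[c [ic c0 ck cA str]] [_ maxp] [_ maxq].
rewrite -(chain_nsteps str); apply: leq_trans (nsteps_split ic cA iB) _.
apply: leq_add.
  apply: maxp; have /= := chain_of_ascending (fun j => capI_ideal (ic j) iB) (ascending_capI cA).
  by rewrite c0 ck capI_idl // capI_idr.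
apply: maxq; have /= := chain_of_ascending (fun j => sumI_ideal (ic j) iB) (ascending_sumI cA).
by rewrite c0 ck sumI_idr ?sumI_idl //; [rewrite -ck | rewrite -c0].
Qed.

Lemma has_length_add A B C p q : is_ideal B -> subI A B -> subI B C ->
  has_length A B p -> has_length B C q -> has_length A C (p + q).
Proof.
move=> iB AB BC hp hq; split; first exact: chain_cat hp.1 hq.1.
by move=> k /(chain_le_add iB AB BC); apply.
Qed.

Lemma chain_le1 A B n : is_chain A B n ->
  (forall X, is_ideal X -> subI A X -> subI X B -> subI X A \/ subI B X) -> (n <= 1)%N.
Proof.
move=> /chain_ascending[c [ic c0 cn cA str]] dich; rewrite -(chain_nsteps str).
apply: (nsteps_le1 (B' := A) (B := B)) => // k kn.
by rewrite -c0 -cn; split; apply: (ascending_le cA); rewrite ?kn ?leqnn.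
Qed.

End LengthAlgebra.

(** * Matlis duality *)

Section Duality.
Variable R : comUnitRingType.
Implicit Types (A B J K X : R -> Prop) (z : R).
Variable m : R -> Prop.
Hypotheses (noeth : noetherian R) (loc : is_local m) (d0 : dim0 m) (ss : simple_socle m).

Lemma length_adjoin_le1 J z a : is_ideal J -> (forall b, m b -> J (b * z)) ->
  has_length J (adjoin J z) a -> (a <= 1)%N.
Proof.
move=> iJ mz [/chain_le1 + _]; apply=> X iX JX XJz.
exact: (adjoin_dichotomy loc iJ iX mz JX XJz).
Qed.

(* If [y1] annihilates [J] but not [z], then [y1 z] spans the simple socle, so
   every [y] annihilating [J] is [c y1] modulo the annihilator of [J + Rz]. *)
Lemma ann_adjoin_dichotomy J z X : is_ideal J -> is_ideal X -> (forall b, m b -> J (b * z)) ->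
  subI (ann (adjoin J z)) X -> subI X (ann J) -> subI X (ann (adjoin J z)) \/ subI (ann J) X.
Proof.
move=> iJ iX mz JzX XJ.
case: (EM (subI X (ann (adjoin J z)))) => [|/not_subI[y1 Xy1 ny1]]; [by left | right].
have annJ_z y : ann J y -> y * z = 0 -> ann (adjoin J z) y.
  by move=> Jy yz _ [a [c [Ja ->]]]; rewrite /zeroI mulrDr (Jy a Ja) add0r mulrCA yz mulr0.
have soc y : ann J y -> colon (@zeroI R) m (y * z).
  by move=> Jy b mb; rewrite /zeroI -mulrA [z * b]mulrC; apply/Jy/mz.
have y1z : y1 * z <> 0 by move=> y1z; apply/ny1/annJ_z => //; apply: XJ.
pose Y t := exists c, t = c * (y1 * z).
have iY : is_ideal Y.
  split; first by exists 0; rewrite mul0r.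
  split=> [_ _ [a ->] [b ->] | a _ [b ->]]; first by exists (a + b); rewrite mulrDl.
  by exists (a * b); rewrite mulrA.
have Ysoc : subI Y (colon (@zeroI R) m).
  by move=> _ [c ->]; apply: (idealMl (colon_ideal m zeroI_ideal)); apply/soc/XJ.
case: (ss.2 Y iY Ysoc) => [/(_ (y1 * z)) Y0 | socY y Jy].
  by case: y1z; apply: Y0; exists 1; rewrite mul1r.
have [c yzc] := socY _ (soc y Jy).
have iJ' := ann_ideal J.
rewrite -(subrK (c * y1) y); apply: (idealD iX); last exact: idealMl.
apply/JzX/annJ_z; first by apply: (idealB iJ') => //; apply/(idealMl iJ')/XJ.
by rewrite mulrBl yzc mulrA subrr.
Qed.

Lemma length_ann_adjoin_le1 J z l : is_ideal J -> (forall b, m b -> J (b * z)) ->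
  has_length (ann (adjoin J z)) (ann J) l -> (l <= 1)%N.
Proof.
move=> iJ mz [/chain_le1 + _]; apply=> X iX.
exact: (ann_adjoin_dichotomy iJ iX mz).
Qed.

Lemma length_ann_le J J' L : is_ideal J -> is_ideal J' -> subI J J' -> has_length J J' L ->
  exists2 l, has_length (ann J') (ann J) l & (l <= L)%N.
Proof.
elim: L J => [|L IH] J iJ iJ' JJ' hL.
  have [l hl] := has_length_exists noeth loc d0 (ann_ideal J') (ann_ideal J) (ann_anti JJ').
  exists l => //; rewrite leqn0; apply/eqP/(has_length_eq0 hl).
  exact/ann_anti/((has_length_eq0 hL).1 erefl).
have [w J'w nJw] : exists2 w, J' w & ~ J w.
  by apply/not_subI => /(has_length_eq0 hL).2.
have [c [nJz mz]] := socle_multiple noeth d0 iJ nJw.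
set K := adjoin J (c * w); have iK : is_ideal K by apply: adjoin_ideal.
have JK : subI J K by apply: adjoin_subl.
have KJ' : subI K J'.
  by move=> _ [a [b [Ja ->]]]; apply: (idealD iJ'); [apply: JJ' | do 2!apply: (idealMl iJ')].
have mz' b : m b -> J (b * (c * w)) by move/mz; rewrite mulrC.
have [a ha] := has_length_exists noeth loc d0 iJ iK JK.
have [b hb] := has_length_exists noeth loc d0 iK iJ' KJ'.
have a1 : a = 1%N.
  have a_le1 := length_adjoin_le1 iJ mz' ha.
  have Kz : K (c * w) by apply: adjoin_gen.
  have a_ne0 : a <> 0%N by move/(has_length_eq0 ha)/(_ _ Kz).
  by case: a a_le1 a_ne0 {ha} => [|[]].
have bL : b = L.
  by have := has_length_uniq (has_length_add iK JK KJ' ha hb) hL; rewrite a1 add1n => -[].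
rewrite bL in hb; have [l1 hl1 l1L] := IH K iK iJ' KJ' hb.
have [l2 hl2] := has_length_exists noeth loc d0 (ann_ideal K) (ann_ideal J) (ann_anti JK).
exists (l1 + l2)%N; first exact: has_length_add (ann_ideal _) (ann_anti KJ') (ann_anti JK) hl1 hl2.
by rewrite -addn1 leq_add // (length_ann_adjoin_le1 iJ mz' hl2).
Qed.

(* Duality cannot shorten any of the three pieces of [0 ⊆ J ⊆ J' ⊆ R], while
   the total length is preserved because [ann R = 0] and [ann 0 = R]. *)
Lemma length_ann J J' L : is_ideal J -> is_ideal J' -> subI J J' -> has_length J J' L ->
  has_length (ann J') (ann J) L.
Proof.
move=> iJ iJ' JJ' hL.
have iT : is_ideal (fun _ : R => True) by [].
have z0J := zeroI_sub iJ; have J'T : subI J' (fun _ => True) by [].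
have [a ha] := has_length_exists noeth loc d0 zeroI_ideal iJ z0J.
have [b hb] := has_length_exists noeth loc d0 iJ' iT J'T.
have [a' ha' a'a] := length_ann_le zeroI_ideal iJ z0J ha.
have [l hl lL] := length_ann_le iJ iJ' JJ' hL.
have [b' hb' b'b] := length_ann_le iJ' iT J'T hb.
have total := has_length_add iJ z0J (subI_trans JJ' J'T) ha (has_length_add iJ' JJ' J'T hL hb).
have total' := has_length_add (ann_ideal J') (ann_anti J'T) (ann_anti (subI_trans z0J JJ'))
  hb' (has_length_add (ann_ideal J) (ann_anti JJ') (ann_anti z0J) hl ha').
rewrite ann_full ann_zero in total'.
have E := has_length_uniq total total'.
by have -> : L = l by lia.
Qed.

Lemma ann_annK J : is_ideal J -> ann (ann J) = J.
Proof.
move=> iJ; have JJ := @sub_ann_ann _ J.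
have [n hn] := has_length_exists noeth loc d0 iJ (ann_ideal _) JJ.
have hd := length_ann iJ (ann_ideal _) JJ hn.
rewrite (_ : ann (ann (ann J)) = ann J) in hd; last first.
  by apply: subI_anti; [apply: ann_anti | apply: sub_ann_ann].
have n0 : n = 0%N by apply/(has_length_eq0 hd).
by apply: subI_anti => //; apply/(has_length_eq0 hn).
Qed.

End Duality.

(** * The associated graded ring *)

Section GradedRing.
Variable R : comUnitRingType.
Implicit Types (f g h x y : Gel R) (c : R).
Variable I : R -> Prop.
Hypothesis iI : is_ideal I.

Let pI n := powI_ideal iI n.

Definition Gsingle j c : Gel R := fun k => if k == j then c else 0.
Definition Gconst c := Gsingle 0 c.

Lemma Gmul_singler x j c k :
  Gmul x (Gsingle j c) k = if (j <= k)%N then x (k - j)%N * c else 0.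
Proof.
rewrite /Gmul /Gsingle; case: leqP => jk; last first.
  by rewrite big1 // => i _; case: eqP => [E|]; [have := ltn_ord i; lia | rewrite mulr0].
have kj : (k - j < k.+1)%N by rewrite ltnS leq_subr.
rewrite (bigD1 (Ordinal kj)) //= subKn // eqxx big1 ?addr0 // => i /eqP ik.
case: eqP => [E|]; last by rewrite mulr0.
by case: ik; apply: val_inj => /=; have := ltn_ord i; lia.
Qed.

Lemma Gmul_singlel j c y k :
  Gmul (Gsingle j c) y k = if (j <= k)%N then c * y (k - j)%N else 0.
Proof.
rewrite /Gmul /Gsingle; case: leqP => jk; last first.
  by rewrite big1 // => i _; case: eqP => [E|]; [have := ltn_ord i; lia | rewrite mul0r].
have jk1 : (j < k.+1)%N by rewrite ltnS.
rewrite (bigD1 (Ordinal jk1)) //= eqxx big1 ?addr0 // => i /eqP ij.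
by case: eqP => [E|]; [case: ij; apply: val_inj | rewrite mul0r].
Qed.

Lemma Gmul_constl c y k : Gmul (Gconst c) y k = c * y k.
Proof. by rewrite Gmul_singlel subn0. Qed.

Lemma Gmul0n f g : Gmul f g 0%N = f 0%N * g 0%N.
Proof. by rewrite /Gmul big_ord_recl big_ord0 addr0. Qed.

Lemma GmulC f g k : Gmul f g k = Gmul g f k.
Proof.
rewrite /Gmul (reindex_inj rev_ord_inj) /=; apply: eq_bigr => i _.
by rewrite mulrC subSS subKn // -ltnS.
Qed.

Lemma inG_single j c : powI I j c -> inG I (Gsingle j c).
Proof. by move=> Pc k; rewrite /Gsingle; case: eqP => [->|_] //; apply: ideal0. Qed.

Lemma inG_const c : inG I (Gconst c). Proof. exact: inG_single. Qed.

Lemma inG_Gzero : inG I (Gzero R). Proof. by move=> k; apply: ideal0. Qed.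

Lemma inG_Gadd f g : inG I f -> inG I g -> inG I (Gadd f g).
Proof. by move=> Hf Hg k; apply: idealD. Qed.

Lemma inG_Gmul f g : inG I f -> inG I g -> inG I (Gmul f g).
Proof.
move=> Hf Hg k; apply: ideal_sum => // i _.
by have := powI_mul iI (Hf i) (Hg (k - i)%N); rewrite subnKC // -ltnS.
Qed.

Lemma inG_scale c f : inG I f -> inG I (fun k => c * f k).
Proof. by move=> Hf k; apply: idealMl. Qed.

Lemma geq_of_eq f g : f =1 g -> Defs.geq I f g.
Proof. by move=> fg k; rewrite fg subrr; apply: ideal0. Qed.

Lemma geq_sym f g : Defs.geq I f g -> Defs.geq I g f.
Proof. by move=> fg k; rewrite -opprB; apply: idealN. Qed.

Lemma geq_trans f g h : Defs.geq I f g -> Defs.geq I g h -> Defs.geq I f h.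
Proof. by move=> fg gh k; rewrite -(subrKA (g k)); apply: idealD. Qed.

Lemma geq0P f : Defs.geq I f (Gzero R) <-> forall k, powI I k.+1 (f k).
Proof. by rewrite /Defs.geq /Gzero; split=> H k; [rewrite -[f k]subr0 | rewrite subr0]. Qed.

Lemma geq_Gmull f f' g : inG I g -> Defs.geq I f f' -> Defs.geq I (Gmul f g) (Gmul f' g).
Proof.
move=> Hg ff' k; rewrite /Gmul -sumrB; apply: ideal_sum => // i _.
by rewrite -mulrBl; have := powI_mul iI (ff' i) (Hg (k - i)%N); rewrite addSn subnKC // -ltnS.
Qed.

Lemma geq_Gmulr f g g' : inG I f -> Defs.geq I g g' -> Defs.geq I (Gmul f g) (Gmul f g').
Proof. by move=> Hf gg' k; rewrite (GmulC f g) (GmulC f g'); apply: geq_Gmull. Qed.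

Section GidealFacts.
Variable J : Gel R -> Prop.
Hypothesis gJ : Gideal I J.

Lemma Gideal_inG x : J x -> inG I x. Proof. by case: gJ => + _; apply. Qed.
Lemma Gideal0 : J (Gzero R). Proof. by case: gJ => _ []. Qed.
Lemma Gideal_geq x y : J x -> inG I y -> Defs.geq I x y -> J y.
Proof. by case: gJ => _ [_ [+ _]]; apply. Qed.
Lemma GidealD x y : J x -> J y -> J (Gadd x y).
Proof. by case: gJ => _ [_ [_ [+ _]]]; apply. Qed.
Lemma GidealM a x : inG I a -> J x -> J (Gmul a x).
Proof. by case: gJ => _ [_ [_ [_ +]]]; apply. Qed.

Lemma Gideal_eq x y : J x -> x =1 y -> J y.
Proof.
move=> Jx xy; apply: (Gideal_geq Jx); last exact: geq_of_eq.
by move=> k; rewrite -xy; apply: Gideal_inG.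
Qed.

Lemma Gideal_lin x y c : J x -> J y -> J (fun k => x k + c * y k).
Proof.
move=> Jx Jy; apply: Gideal_eq (GidealD Jx (GidealM (inG_const c) Jy)) _.
by move=> k; rewrite /Gadd Gmul_constl.
Qed.

Lemma Gideal_single_ideal j : is_ideal (fun c => J (Gsingle j c)).
Proof.
split; first by apply: Gideal_eq Gideal0 _ => k; rewrite /Gsingle; case: eqP.
split=> [a b Ja Jb | a b Jb].
  apply: Gideal_eq (Gideal_lin 1 Ja Jb) _ => k.
  by rewrite mul1r /Gsingle; case: eqP; rewrite ?addr0.
apply: Gideal_eq (GidealM (inG_const a) Jb) _ => k.
by rewrite Gmul_constl /Gsingle; case: eqP; rewrite ?mulr0.
Qed.

End GidealFacts.

End GradedRing.

Section GradedInverse.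
Variable R : comUnitRingType.
Implicit Types (f : Gel R) (v : R).

(* The first [n.+1] coefficients of [g] solving [f g = 1], where [v = (f 0)^-1]:
   [g (k.+1) = - v * \sum_(j <= k) f (j.+1) * g (k - j)]. *)
Fixpoint Ginv_seq f v n : seq R :=
  if n is n'.+1 then
    rcons (Ginv_seq f v n') (- v * \sum_(j < n'.+1) f j.+1 * nth 0 (Ginv_seq f v n') (n' - j))
  else [:: v].

Definition Ginv f v : Gel R := fun k => nth 0 (Ginv_seq f v k) k.

Lemma size_Ginv_seq f v n : size (Ginv_seq f v n) = n.+1.
Proof. by elim: n => [|n IH] //=; rewrite size_rcons IH. Qed.

Lemma nth_Ginv_seq f v n i : (i <= n)%N -> nth 0 (Ginv_seq f v n) i = Ginv f v i.
Proof.
elim: n => [|n IH] in i *; first by rewrite leqn0 => /eqP ->.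
rewrite leq_eqVlt => /orP[/eqP -> // | iN].
by rewrite /= nth_rcons size_Ginv_seq iN; apply: IH.
Qed.

Lemma GinvS f v k : Ginv f v k.+1 = - v * \sum_(j < k.+1) f j.+1 * Ginv f v (k - j)%N.
Proof.
rewrite {1}/Ginv /= nth_rcons size_Ginv_seq ltnn eqxx; congr (_ * _).
by apply: eq_bigr => j _; rewrite nth_Ginv_seq // leq_subr.
Qed.

Lemma Gmul_Ginv f : f 0%N \is a GRing.unit -> Gmul f (Ginv f (f 0%N)^-1) =1 Gone R.
Proof.
move=> u [|k]; first by rewrite Gmul0n /= mulrV.
rewrite /Gmul big_ord_recl /= subn0 GinvS mulrA mulrN mulrV // mulN1r addrC.
by apply/eqP; rewrite subr_eq0; apply/eqP/eq_bigr => j _; rewrite subSS.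
Qed.

Lemma inG_Ginv I f v : is_ideal I -> inG I f -> inG I (Ginv f v).
Proof.
move=> iI Hf; suff H n k : (k <= n)%N -> powI I k (Ginv f v k) by move=> k; apply: (H k).
elim: n k => [|n IH] k; first by rewrite leqn0 => /eqP ->.
rewrite leq_eqVlt => /orP[/eqP -> | ]; last exact: IH.
rewrite GinvS; apply: (idealMl (powI_ideal iI _)); apply: (ideal_sum (powI_ideal iI _)) => j _.
have jn : (j <= n)%N by rewrite -ltnS.
by have := powI_mul iI (Hf j.+1) (IH (n - j)%N (leq_subr _ _)); rewrite addSn subnKC.
Qed.

End GradedInverse.

Section GradedLocal.
Variable R : comUnitRingType.
Implicit Types (f g x y : Gel R).
Variables (m I : R -> Prop) (r : nat).
Hypotheses (loc : is_local m) (iI : is_ideal I) (Im : subI I m).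
Hypothesis Ir1 : eqI (powI I r.+1) (@zeroI R).

Lemma Gmax_ideal : Gideal I (Gmax m I).
Proof.
have im := local_ideal loc.
split; first by move=> x [].
split; first by split; [apply: inG_Gzero | apply: ideal0].
split=> [x y [Hx mx] Hy xy|]; first split=> //.
  have := xy 0%N; rewrite (powI1 iI) => /Im mxy.
  by rewrite -(subKr (x 0%N) (y 0%N)); apply: (idealB im).
split=> [x y [Hx mx] [Hy my] | a x Ha [Hx mx]].
  by split; [apply: inG_Gadd | apply: (idealD im)].
by split; [apply: inG_Gmul | rewrite Gmul0n; apply: (idealMl im)].
Qed.

Lemma G_local_holds : G_local m I.
Proof.
split; first exact: Gmax_ideal.
split; first by case=> _; apply: local_not1 loc.
move=> f Hf nm; exists (Ginv f (f 0%N)^-1); split; first exact: inG_Ginv.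
apply: (geq_of_eq iI) => k; apply: Gmul_Ginv; apply: (local_unit loc) => mf0.
by apply: nm; split.
Qed.

Definition Gpow f n := iter n (Gmul f) (Gone R).

Lemma inG_Gpow f n : inG I f -> inG I (Gpow f n).
Proof. by move=> Hf; elim: n => [|n IH] /=; [apply: inG_const | apply: inG_Gmul]. Qed.

Lemma Gpow_low f : f 0%N = 0 -> forall n k, (k < n)%N -> Gpow f n k = 0.
Proof.
move=> f0; elim=> [|n IH] k //= kn; rewrite /Gmul big1 // => -[[|j] ij] _ /=.
  by rewrite f0 mul0r.
by rewrite IH ?mulr0 //; lia.
Qed.

Lemma Gpow_nilpotent f : inG I f -> f 0%N = 0 -> Defs.geq I (Gpow f r.+1) (Gzero R).
Proof.
move=> Hf f0; apply: (geq_of_eq iI) => k; case: (ltnP k r.+1) => kr; first exact: Gpow_low.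
exact: (powI_vanish Ir1 kr (inG_Gpow _ Hf k)).
Qed.

End GradedLocal.

Section GradedDimension.
Variable R : comUnitRingType.
Implicit Types (f g x y : Gel R).
Variables (m I : R -> Prop) (r : nat).
Hypotheses (d0 : dim0 m) (iI : is_ideal I).
Hypothesis Ir1 : eqI (powI I r.+1) (@zeroI R).

Lemma Gprime_const_prime P : G_prime I P -> is_prime (fun c => P (Gconst c)).
Proof.
move=> [gP [nP1 prP]]; split; first exact: (Gideal_single_ideal iI gP 0).
split=> // a b Pab; apply: prP; [exact: inG_const | exact: inG_const |].
apply: (Gideal_eq iI gP Pab) => k.
by rewrite Gmul_constl /Gconst /Gsingle; case: eqP; rewrite ?mulr0.
Qed.

Definition Gpos x : Gel R := fun k => if k is 0 then 0 else x k.

Lemma Gprime_Gpos P x : G_prime I P -> inG I x -> P (Gpos x).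
Proof.
move=> [gP [nP1 prP]] Hx.
have Hpos : inG I (Gpos x) by case=> // k; apply: Hx.
have : P (Gpow (Gpos x) r.+1).
  apply: (Gideal_geq gP (Gideal0 gP)); first exact: inG_Gpow.
  by apply/(geq_sym iI)/(Gpow_nilpotent iI Ir1).
elim: r.+1 => [|n IH] /=; first by move/nP1.
by case/(prP _ _ Hpos (inG_Gpow iI n Hpos)) => // /IH.
Qed.

Lemma G_dim0_holds : G_dim0 m I.
Proof.
move=> P PP; have [gP _] := PP; have pm := d0 (Gprime_const_prime PP).
move=> x; split=> [Px | [Hx mx]].
  have Hx := Gideal_inG gP Px; split=> //; apply/pm.
  apply: (Gideal_eq iI gP (Gideal_lin iI gP (-1) Px (Gprime_Gpos PP Hx))) => -[|k] /=.
    by rewrite mulr0 addr0.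
  by rewrite mulN1r subrr.
apply: (Gideal_eq iI gP (Gideal_lin iI gP 1 ((pm _).2 mx) (Gprime_Gpos PP Hx))) => -[|k] /=.
  by rewrite mulr0 addr0.
by rewrite mul1r add0r.
Qed.

End GradedDimension.

Section GradedNoetherian.
Variable R : comUnitRingType.
Implicit Types (f g x y : Gel R) (J : Gel R -> Prop).
Variables (I : R -> Prop) (r : nat).
Hypotheses (noeth : noetherian R) (iI : is_ideal I).
Hypothesis Ir1 : eqI (powI I r.+1) (@zeroI R).

Lemma noetherian_stable_upto (c : nat -> nat -> R -> Prop) K :
  (forall k n, is_ideal (c k n)) -> (forall k n, subI (c k n) (c k n.+1)) ->
  exists N, forall k n, (k <= K)%N -> (N <= n)%N -> subI (c k n) (c k N).
Proof.
move=> ic cS; have cmono k n n' : (n <= n')%N -> subI (c k n) (c k n').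
  by move=> nn'; apply: (ascending_le (L := n') (fun j _ => cS k j)); rewrite nn' leqnn.
elim: K => [|K [N1 H1]].
  have [N0 H0] := noeth (ic 0%N) (cS 0%N).
  by exists N0 => k n; rewrite leqn0 => /eqP ->; apply: H0.
have [N2 H2] := noeth (ic K.+1) (cS K.+1).
exists (maxn N1 N2) => k n; rewrite leq_eqVlt => /orP[/eqP-> | kK] Nn x.
  by move/(H2 _ (leq_trans (leq_maxr _ _) Nn)); apply: cmono; apply: leq_maxr.
by move/(H1 _ _ kK (leq_trans (leq_maxl _ _) Nn)); apply: cmono; apply: leq_maxl.
Qed.

Definition Glead J k : R -> Prop :=
  fun a => exists f, [/\ J f, forall j, (k < j)%N -> f j = 0 & f k = a].

Lemma Glead_ideal J k : Gideal I J -> is_ideal (Glead J k).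
Proof.
move=> gJ; split; first by exists (Gzero R); split=> //; apply: Gideal0 gJ.
split=> [_ _ [f [Jf fk <-]] [g [Jg gk <-]] | b _ [f [Jf fk <-]]].
  exists (Gadd f g); split=> [|j kj|//]; first exact: (GidealD gJ Jf Jg).
  by rewrite /Gadd fk // gk // addr0.
exists (fun j => b * f j); split=> [|j kj|//]; last by rewrite fk ?mulr0.
by apply: (Gideal_eq iI gJ (GidealM gJ (inG_const iI b) Jf)) => j; rewrite Gmul_constl.
Qed.

(* Once the leading-coefficient ideals of the chain have stabilised in every
   degree [<= r], an element of [c n] is rebuilt in [c N] degree by degree,
   from the top down. *)
Lemma G_noetherian_holds : G_noetherian I.
Proof.
move=> c gc cS.
have cmono n n' x : (n <= n')%N -> c n x -> c n' x.
  by move=> /subnK <-; elim: (n' - n)%N => [|k IH] // /IH; rewrite addSn; apply: cS.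
have [|N HN] := noetherian_stable_upto (c := fun k n => Glead (c n) k) r
  (fun k n => Glead_ideal k (gc n)).
  by move=> k n a [f [cf fk <-]]; exists f; split=> //; apply: cS.
exists N => n x Nn cx.
suff low K f : c n f -> (forall j, (K <= j)%N -> f j = 0) -> c N f.
  by apply: (low r.+1 x cx) => j rj; apply: (powI_vanish Ir1 rj (Gideal_inG (gc n) cx j)).
elim: K f => [|K IH] f cf fK.
  by apply: (Gideal_eq iI (gc N) (Gideal0 (gc N))) => k; rewrite fK.
case: (ltnP r K) => rK.
  apply: (IH f cf) => j; rewrite leq_eqVlt => /orP[/eqP<- | /fK //].
  exact: (powI_vanish Ir1 rK (Gideal_inG (gc n) cf K)).
have [g [cg gK gf]] := HN K n rK Nn (f K) (ex_intro _ f (And3 cf (fun j Kj => fK j Kj) erefl)).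
have cfg : c N (fun k => f k + (-1) * g k).
  apply: IH => [|j]; first exact: (Gideal_lin iI (gc n) _ cf (cmono _ _ _ Nn cg)).
  rewrite leq_eqVlt => /orP[/eqP<- | Kj]; first by rewrite gf mulN1r subrr.
  by rewrite fK // gK // mulr0 addr0.
by apply: (Gideal_eq iI (gc N) (Gideal_lin iI (gc N) 1 cfg cg)) => k; rewrite mul1r mulN1r subrK.
Qed.

End GradedNoetherian.

(** * The socle of G(I) *)

Section GradedSocle.
Variable R : comUnitRingType.
Implicit Types (x y : Gel R) (a c u z : R).
Variables (m I : R -> Prop) (r : nat).
Hypotheses (noeth : noetherian R) (loc : is_local m) (d0 : dim0 m) (ss : simple_socle m).
Hypotheses (iI : is_ideal I) (Im : subI I m).
Hypothesis Ir_neq0 : exists c, powI I r c /\ c <> 0.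
Hypothesis Ir1 : eqI (powI I r.+1) (@zeroI R).

Let pI n := powI_ideal iI n.

Lemma Gmax_single j c : powI I j.+1 c -> Gmax m I (Gsingle j.+1 c).
Proof. by move=> Pc; split; [apply: inG_single | apply: ideal0 (local_ideal loc)]. Qed.

Lemma Gsoc_mulm x j : Gsoc m I x -> forall a, m a -> powI I j.+1 (x j * a).
Proof.
move=> [Hx xsoc] a ma; have := (geq0P _ _).1 (xsoc _ (conj (inG_const iI a) ma)) j.
by rewrite Gmul_singler subn0.
Qed.

Lemma Gsoc_mulI x j : Gsoc m I x -> forall a, I a -> powI I j.+2 (x j * a).
Proof.
move=> [Hx xsoc] a Ia; rewrite -(powI1 iI) in Ia.
by have := (geq0P _ _).1 (xsoc _ (Gmax_single Ia)) j.+1; rewrite Gmul_singler subn1.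
Qed.

(* [G_+] is generated by [m] in degree 0 and [I] in degree 1, and the action
   of higher degrees is controlled by that of [I]. *)
Lemma Gsoc_single k u : powI I k u -> (forall a, m a -> powI I k.+1 (u * a)) ->
  (forall a, I a -> powI I k.+2 (u * a)) -> Gsoc m I (Gsingle k u).
Proof.
move=> Pu mu Iu; split=> [|y [Hy my]]; first exact: inG_single.
apply/geq0P => l; rewrite Gmul_singlel.
case: ltngtP => kl; last by rewrite -kl subnn; apply: mu.
  have Py : powI I (l - k).-1.+1 (y (l - k)%N) by rewrite prednK ?subn_gt0 //; apply: Hy.
  by have := powI_mul_of_mulI iI Iu Py; have -> : (k.+2 + (l - k).-1 = l.+1)%N by lia.
exact: (ideal0 (pI _)).
Qed.

Lemma top_socle : exists z, [/\ powI I r z, z <> 0 & forall a, m a -> a * z = 0].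
Proof.
have [x [Px nx]] := Ir_neq0; have [c [ncx mcx]] := socle_multiple noeth d0 zeroI_ideal nx.
by exists (c * x); split=> //; apply: (idealMl (pI r)).
Qed.

Lemma Gsoc_top z : powI I r z -> (forall a, m a -> a * z = 0) -> Gsoc m I (Gsingle r z).
Proof.
move=> Pz mz; apply: Gsoc_single => // a.
  by move=> ma; rewrite mulrC mz //; apply: (ideal0 (pI _)).
move=> Ia; have Ia1 : powI I 1 a by rewrite (powI1 iI).
rewrite (powI_vanish Ir1 _ (powI_mul iI Pz Ia1)) ?addn1 //.
exact: (ideal0 (pI _)).
Qed.

Definition Gsocle_top := forall i, (i < r)%N -> Soc_deg_zero m I i.

Definition ann_powI_dual := forall i, (i < r)%N -> eqI (ann (powI I (r - i))) (powI I i.+1).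

Lemma Gsoc_concentrated x j : ann_powI_dual -> Gsoc m I x -> j <> r -> powI I j.+1 (x j).
Proof.
move=> dual xsoc jr; have Hx := xsoc.1.
case: (ltngtP j r) => // [jr' | rj]; last first.
  by rewrite (powI_vanish Ir1 rj (Hx j)); apply: ideal0 (pI _).
apply/(dual j jr') => y Py; apply/Ir1.
have Py' : powI I (r - j).-1.+1 y by rewrite prednK ?subn_gt0.
have -> : r.+1 = (j.+2 + (r - j).-1)%N by lia.
exact: (powI_mul_of_mulI iI (Gsoc_mulI j xsoc) Py').
Qed.

Lemma Gsoc_geq_top x : ann_powI_dual -> Gsoc m I x -> Defs.geq I x (Gsingle r (x r)).
Proof.
move=> dual xsoc k; rewrite /Gsingle; case: eqP => [->|kr].
  by rewrite subrr; apply: ideal0 (pI _).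
by rewrite subr0; apply: Gsoc_concentrated.
Qed.

(* Under duality the socle of [G] is the top-degree copy of the socle of [R],
   which is simple. *)
Lemma Gsoc_simple : ann_powI_dual -> forall N, Gideal I N -> (forall x, N x -> Gsoc m I x) ->
  (forall x, N x -> Defs.geq I x (Gzero R)) \/ (forall x, Gsoc m I x -> N x).
Proof.
move=> dual N gN NS.
case: (EM (forall x, N x -> Defs.geq I x (Gzero R))) => [|/existsNP[x /not_implyP[Nx nx]]].
  by left.
right.
pose J c := N (Gsingle r c); have iJ : is_ideal J := Gideal_single_ideal iI gN r.
have Jsoc : subI J (colon (@zeroI R) m).
  by move=> c Jc a ma; apply/Ir1; have := Gsoc_mulm r (NS _ Jc) ma; rewrite /Gsingle eqxx.
have xJ : J (x r).
  exact: (Gideal_geq gN Nx (inG_single iI ((NS _ Nx).1 r)) (Gsoc_geq_top dual (NS _ Nx))).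
case: (ss.2 J iJ Jsoc) => [J0 | socJ y ysoc].
  case: nx; apply: (geq_trans iI (Gsoc_geq_top dual (NS _ Nx))).
  by apply: (geq_of_eq iI) => k; rewrite /Gsingle; case: eqP => // _; apply: J0.
have yJ : J (y r) by apply: socJ => a ma; apply/Ir1; apply: Gsoc_mulm.
exact: (Gideal_geq gN yJ ysoc.1 (geq_sym iI (Gsoc_geq_top dual ysoc))).
Qed.

Lemma ann_powI_dual_Gorenstein : ann_powI_dual -> G_Gorenstein m I.
Proof.
move=> dual; split; first exact: G_local_holds.
split; first exact: G_noetherian_holds.
split; first exact: G_dim0_holds.
split; last exact: Gsoc_simple.
have [z [Pz nz mz]] := top_socle; exists (Gsingle r z); split; first exact: Gsoc_top.
by move=> /geq0P /(_ r); rewrite /Gsingle eqxx => /Ir1.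
Qed.

Lemma Gsoc_scale x a : Gsoc m I x -> Gsoc m I (fun k => a * x k).
Proof.
move=> [Hx xsoc]; split=> [|w wmax]; first exact: inG_scale.
apply/geq0P => k; have -> : Gmul (fun k => a * x k) w k = a * Gmul x w k.
  by rewrite /Gmul mulr_sumr; apply: eq_bigr => j _; rewrite mulrA.
exact/(idealMl (pI _))/((geq0P _ _).1 (xsoc w wmax)).
Qed.

(* [G_+] kills the socle, so [G] acts on it through degree 0. *)
Lemma Gsoc_Gmul x g : Gsoc m I x -> inG I g -> Defs.geq I (Gmul g x) (fun k => g 0%N * x k).
Proof.
move=> [Hx xsoc] Hg k.
have gmax : Gmax m I (Gpos g) by split; [case=> // j; apply: Hg | apply: ideal0 (local_ideal loc)].
have := (geq0P _ _).1 (xsoc _ gmax) k.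
by rewrite GmulC /Gmul !big_ord_recl /= mul0r add0r subn0 addrAC subrr add0r.
Qed.

Definition Gprincipal x : Gel R -> Prop :=
  fun y => inG I y /\ exists a, Defs.geq I y (fun k => a * x k).

Lemma Gprincipal_ideal x : Gsoc m I x -> Gideal I (Gprincipal x).
Proof.
move=> xsoc; split; first by move=> y [].
split; first by split; [apply: inG_Gzero | exists 0; apply: (geq_of_eq iI) => k; rewrite mul0r].
split=> [y y' [Hy [a ya]] Hy' yy'|].
  by split=> //; exists a; apply: (geq_trans iI (geq_sym iI yy') ya).
split=> [y y' [Hy [a ya]] [Hy' [b yb]] | g y Hg [Hy [a ya]]].
  split; first exact: inG_Gadd.
  by exists (a + b) => k; rewrite /Gadd mulrDl opprD addrACA; apply: idealD (ya k) (yb k).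
split; first exact: inG_Gmul.
exists (g 0%N * a); apply: (geq_trans iI (geq_Gmulr iI Hg ya)).
apply: (geq_trans iI (Gsoc_Gmul (Gsoc_scale a xsoc) Hg)).
by apply: (geq_of_eq iI) => k; rewrite mulrA.
Qed.

Lemma Gprincipal_sub_soc x y : Gsoc m I x -> Gprincipal x y -> Gsoc m I y.
Proof.
move=> xsoc [Hy [a ya]]; split=> // w wmax.
apply: (geq_trans iI (geq_Gmull iI wmax.1 ya)).
exact: (Gsoc_scale a xsoc).2.
Qed.

Lemma Gorenstein_Gsocle_top : G_Gorenstein m I -> Gsocle_top.
Proof.
move=> [_ [_ [_ [_ simple]]]] i ir x xsoc [_ xhom]; apply: contrapT => nx.
case: (simple _ (Gprincipal_ideal xsoc) (fun y => Gprincipal_sub_soc xsoc)) => [/(_ x) N0 | socN].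
  by apply/nx/N0; split; [exact: xsoc.1 | exists 1; apply: (geq_of_eq iI) => k; rewrite mul1r].
have [z [Pz nz mz]] := top_socle.
have [_ [a za]] := socN _ (Gsoc_top Pz mz).
have xr : x r = 0 by apply/Ir1/xhom => ri; rewrite ri ltnn in ir.
by apply: nz; apply/Ir1; have := za r; rewrite /Gsingle eqxx xr mulr0 subr0.
Qed.

(* Push [w ∈ I^j \ I^(j+1)] as deep as possible into the [I]-adic filtration
   by multiplying with powers of [I]; moving the deepest product into the
   socle modulo the next power gives a socle element of [G] of degree [< r]. *)
Lemma Gsoc_below_top (w : R) j : powI I j w -> ~ powI I j.+1 w ->
  (forall z, powI I (r - j) z -> w * z = 0) ->
  exists k u, [/\ (k < r)%N, ~ powI I k.+1 u & Gsoc m I (Gsingle k u)].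
Proof.
move=> Pw nPw wann.
pose S t := `[< exists z, powI I t z /\ ~ powI I (j + t).+1 (w * z) >].
have S0 : S 0%N by apply/asboolP; exists 1; rewrite mulr1 addn0.
have Sbound t : S t -> (t <= r - j)%N.
  move/asboolP => [z [Pz nz]]; rewrite leqNgt; apply/negP => tr; apply: nz.
  by rewrite wann; [apply: ideal0 (pI _) | apply: (subI_powI (ltnW tr) Pz)].
case: (ex_maxnP (ex_intro _ 0%N S0) Sbound) => t /asboolP[z [Pz nwz]] tmax.
have [c [nu mu]] := socle_multiple noeth d0 (pI (j + t).+1) nwz.
have jtr : (j + t < r)%N.
  rewrite ltnNge; apply/negP => rjt; apply: nwz; rewrite wann; first exact: ideal0 (pI _).
  by apply: (subI_powI _ Pz); lia.
exists (j + t)%N, (c * (w * z)); split=> //; apply: Gsoc_single => [|a ma|a Ia].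
- exact/(idealMl (pI _))/(powI_mul iI).
- by rewrite mulrC; apply: mu.
rewrite (_ : c * (w * z) * a = w * (z * (c * a))); last by ring.
apply: contrapT => nH; suff /tmax : S t.+1 by rewrite ltnn.
apply/asboolP; exists (z * (c * a)); split; last by rewrite addnS.
by rewrite -addn1; apply: (powI_mul iI) => //; rewrite (powI1 iI); apply: idealMl.
Qed.

Lemma Gsocle_top_ann_powI : Gsocle_top -> ann_powI_dual.
Proof.
move=> top i ir w; split; last exact: (powI_sub_ann iI Ir1 (ltnW ir)).
move=> wann; suff step j : (j <= i)%N -> powI I j w -> powI I j.+1 w.
  suff Pj j : (j <= i.+1)%N -> powI I j w by apply: Pj.
  by elim: j => [|j IH] ji //; apply: step; [rewrite -ltnS | apply/IH/ltnW].
move=> ji Pw; apply: contrapT => nPw.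
have [|k [u [kr nu usoc]]] := Gsoc_below_top Pw nPw.
  by move=> z Pz; apply: wann; apply: (subI_powI _ Pz); lia.
have hom : Ghomog I k (Gsingle k u).
  split=> [|l /eqP lk]; first exact: usoc.1.
  by rewrite /Gsingle (negbTE lk); apply: ideal0 (pI _).
by apply: nu; have := (geq0P _ _).1 (top k kr _ usoc hom) k; rewrite /Gsingle eqxx.
Qed.

End GradedSocle.

(** * Duality between the powers of I *)

Section PowerDuality.
Variable R : comUnitRingType.
Variables (m I : R -> Prop) (r : nat).
Hypotheses (noeth : noetherian R) (loc : is_local m) (d0 : dim0 m) (ss : simple_socle m).
Hypothesis iI : is_ideal I.
Hypothesis Ir1 : eqI (powI I r.+1) (@zeroI R).

Let pI n := powI_ideal iI n.

Definition ann_powI_dual_half :=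
  forall i, ((2 * i).+1 <= r)%N -> eqI (ann (powI I (r - i))) (powI I i.+1).

Definition grades_symmetric := forall i, ((2 * i).+1 <= r)%N -> forall n,
  has_length (powI I i.+1) (powI I i) n <-> has_length (powI I (r - i).+1) (powI I (r - i)) n.

Definition colon_powI_dual :=
  (forall i, (0 < i < r)%N -> eqI (colon (powI I r) (powI I (r - i))) (powI I i)) /\
  eqI (ann I) (powI I r).

Definition powI_faithful :=
  (forall i, (0 < i < r)%N -> faithful_over (powI I i) (powI I (r - i)) (powI I r)) /\
  faithful_over (powI I r) I (@zeroI R).

Lemma ann_powI0 : ann (powI I 0) = powI I r.+1.
Proof. by rewrite (eqI_eq Ir1); apply: ann_full. Qed.

Lemma ann_powI_dual_half_symmetric : ann_powI_dual_half -> grades_symmetric.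
Proof.
move=> dual i hi.
have annK (X Y : R -> Prop) : is_ideal X -> eqI (ann X) Y -> ann Y = X.
  by move=> iX /eqI_eq <-; apply: (ann_annK noeth loc d0 ss).
have E1 : ann (powI I i.+1) = powI I (r - i) by apply: annK; [apply: pI | apply: dual].
have E2 : ann (powI I i) = powI I (r - i).+1.
  case: i hi {E1} => [|i] hi; first by rewrite subn0 ann_powI0.
  have -> : ((r - i.+1).+1 = r - i)%N by lia.
  by apply: annK; [apply: pI | apply: dual; lia].
have [n0 hn0] := has_length_exists noeth loc d0 (pI i.+1) (pI i) (@powI_subS _ I i).
have := length_ann noeth loc d0 ss (pI _) (pI _) (@powI_subS _ I i) hn0.
rewrite E1 E2 => hd n.
by split=> h; [rewrite (has_length_uniq h hn0) | rewrite (has_length_uniq h hd)].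
Qed.

Definition grade_length k : nat :=
  sval (cid (has_length_exists noeth loc d0 (pI k.+1) (pI k) (@powI_subS _ I k))).

Lemma grade_lengthP k : has_length (powI I k.+1) (powI I k) (grade_length k).
Proof. exact: svalP (cid _). Qed.

Lemma has_length_powI a t :
  has_length (powI I (a + t)) (powI I a) (\sum_(k < t) grade_length (a + k)).
Proof.
elim: t => [|t IH].
  by rewrite addn0 big_ord0; apply: has_length_refl.
rewrite big_ord_recr /= addnS [(_ + grade_length _)%N]addnC.
apply: (has_length_add (pI _) (@powI_subS _ I _) (subI_powI (leq_addr _ _))) => //.
exact: grade_lengthP.
Qed.

Lemma grade_length_sym : grades_symmetric ->
  forall k, (k <= r)%N -> grade_length k = grade_length (r - k).
Proof.
move=> sym k kr; case: (leqP (2 * k).+1 r) => [h1 | h1].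
  exact: has_length_uniq (grade_lengthP k) ((sym k h1 _).2 (grade_lengthP (r - k))).
case: (leqP (2 * (r - k)).+1 r) => [h2 | h2]; last by have -> : (r - k)%N = k by lia.
have := (sym _ h2 (grade_length (r - k))).1 (grade_lengthP _); rewrite subKn // => h.
exact: has_length_uniq (grade_lengthP k) h.
Qed.

(* [I^(i+1) ⊆ ann I^(r-i)], and both have colength [λ(R/I^(r-i))] in [R]: the
   first by symmetry of the grades, the second by duality. *)
Lemma grades_symmetric_ann_powI : grades_symmetric -> ann_powI_dual I r.
Proof.
move=> /grade_length_sym sym i ir; have sub := powI_sub_ann iI Ir1 (ltnW ir).
move=> x; split=> [|/sub //].
have [e he] := has_length_exists noeth loc d0 (pI i.+1) (ann_ideal _) sub.
have := length_ann noeth loc d0 ss (pI _) (pI 0) (subI_powI (leq0n _))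
  (has_length_powI 0 (r - i)).
rewrite ann_powI0 add0n => top.
have := has_length_powI i.+1 (r - i); have -> : (i.+1 + (r - i) = r.+1)%N by lia.
move=> /(has_length_add (pI _) (@subI_powI _ I i.+1 r.+1 (ltnW ir)) sub)/(_ he).
move=> /has_length_uniq/(_ top) total.
have Esum : (\sum_(k < r - i) grade_length (0 + k) = \sum_(k < r - i) grade_length (i.+1 + k))%N.
  rewrite [RHS](reindex_inj rev_ord_inj) /=; apply: eq_bigr => k _.
  have kr : (k < r - i)%N := ltn_ord k.
  by rewrite add0n sym; [congr grade_length | ]; lia.
have e0 : e = 0%N by lia.
by apply: (has_length_eq0 he).1.
Qed.

Lemma colon_powI_ann s x : colon (powI I r) (powI I s) x -> ann (powI I s.+1) x.
Proof.
move=> xs _ [t [Ht ->]]; apply/Ir1; rewrite mulr_sumr big_seq.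
apply: (ideal_sum (pI _)) => p /Ht[P1 P2]; rewrite mulrA -addn1.
by apply: (powI_mul iI); [apply: xs | rewrite (powI1 iI)].
Qed.

Lemma ann_colon_powI s x : eqI (ann I) (powI I r) -> ann (powI I s.+1) x ->
  colon (powI I r) (powI I s) x.
Proof.
move=> annI xs y Py; apply/annI => a Ia; rewrite -mulrA; apply: xs.
by rewrite -addn1; apply: (powI_mul iI) => //; rewrite (powI1 iI).
Qed.

Lemma ann_powI_colon_dual : ann_powI_dual I r -> colon_powI_dual.
Proof.
move=> dual; split=> [i /andP[i0 ir] x|].
  split=> [/colon_powI_ann xs | Px y Py]; last first.
    by have := powI_mul iI Px Py; rewrite subnKC // ltnW.
  have E : (r - i.-1 = (r - i).+1)%N by lia.
  by have := (dual i.-1 (leq_ltn_trans (leq_pred i) ir) x).1; rewrite prednK // E; apply.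
have -> : ann I = ann (powI I 1) by rewrite (powI1 iI).
case: r Ir1 dual => [|r'] Ir1' dual' x.
  by split=> // _ y /Ir1' ->; rewrite /zeroI mulr0.
by have := dual' r' (ltnSn r') x; rewrite subSn // subnn.
Qed.

Lemma colon_dual_ann_powI : colon_powI_dual -> ann_powI_dual I r.
Proof.
move=> [colon_dual annI] i ir x; split=> [xann|]; last first.
  exact: (powI_sub_ann iI Ir1 (ltnW ir)).
have := @ann_colon_powI (r - i.+1) x annI; rewrite subnSK // => /(_ xann).
case: (ltnP i.+1 r) => [ir' | ri]; first by move/(colon_dual i.+1 ir').
have -> : r = i.+1 by apply/eqP; rewrite eqn_leq ir ri.
by rewrite subnn => /(_ 1 Logic.I); rewrite mulr1.
Qed.

Lemma colon_dual_faithful : colon_powI_dual -> powI_faithful.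
Proof. by case=> colonI annI; split=> [i ii x /(colonI i ii x).1 | x /(annI x).1]. Qed.

Lemma faithful_colon_dual : powI_faithful -> colon_powI_dual.
Proof.
case=> faithI faithI'; split=> [i ii x | x]; split; [exact: faithI | | exact: faithI' |].
  by case/andP: ii => _ ir Px y Py; have := powI_mul iI Px Py; rewrite subnKC // ltnW.
by move=> Px y Iy; apply/Ir1; rewrite -addn1; apply: (powI_mul iI) => //; rewrite (powI1 iI).
Qed.

End PowerDuality.

Theorem theorem3p1 (R : comUnitRingType) (m I : R -> Prop) (r : nat) :
  Gorenstein0 m -> is_ideal I -> subI I m ->
  (exists x, powI I r x /\ x <> 0) -> eqI (powI I r.+1) (@zeroI R) ->
  [<-> G_Gorenstein m I;
       forall i, (i < r)%N -> Soc_deg_zero m I i;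
       forall i, (i < r)%N ->
         eqI (colon (@zeroI R) (powI I (r - i))) (powI I i.+1);
       forall i, ((2 * i).+1 <= r)%N ->
         eqI (colon (@zeroI R) (powI I (r - i))) (powI I i.+1);
       forall i, ((2 * i).+1 <= r)%N -> forall n : nat,
         has_length (powI I i.+1) (powI I i) n <->
         has_length (powI I (r - i).+1) (powI I (r - i)) n;
       (forall i, (0 < i < r)%N ->
          eqI (colon (powI I r) (powI I (r - i))) (powI I i)) /\
       eqI (colon (@zeroI R) I) (powI I r);
       (forall i, (0 < i < r)%N ->
          faithful_over (powI I i) (powI I (r - i)) (powI I r)) /\
       faithful_over (powI I r) I (@zeroI R)].
Proof.
move=> [loc [noeth [d0 ss]]] iI Im Ir_neq0 Ir1; tfae.
- exact: (Gorenstein_Gsocle_top noeth loc d0 iI Ir_neq0 Ir1).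
- exact: (Gsocle_top_ann_powI noeth d0 iI Ir1).
- by move=> dual i hi; apply: dual; lia.
- exact: (ann_powI_dual_half_symmetric noeth loc d0 ss iI Ir1).
- by move/(grades_symmetric_ann_powI noeth loc d0 ss iI Ir1)/(ann_powI_colon_dual iI Ir1).
- exact: colon_dual_faithful.
move/(faithful_colon_dual iI Ir1)/(colon_dual_ann_powI iI Ir1).
exact: (ann_powI_dual_Gorenstein noeth loc d0 ss iI Im Ir_neq0 Ir1).
Qed.
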